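(* Let $X$ be a nonnegative integer-valued random variable whose PGF $X(z)$ has radius of convergence $r>1$, mean $\mu=X'(1)>0$ and variance $\sigma^2=X''(1)-X'(1)^2+X'(1)>0$, such that $|X(z)|<X(r_1)$ whenever $|z|=r_1$, $z\ne r_1$, $r_1\in(0,r)$. For positive integers $n,s$ let $A(z)=X(z)^n$, $\mu_A=n\mu<s$, with degree of $X(z)$ larger than $s/n$. Suppose $\frac{n\mu}{s}=1-\frac{\gamma}{\sqrt s}$ with $\gamma$ bounded away from $0$ and $\infty$ as $s\to\infty$, let $a_0=\sqrt{2\mu}/\sigma$, $b_0=\frac{\gamma\sqrt\mu}{\sigma\sqrt2}$, and for integers $k$ with $k=o(s)$ let $Z_k$ denote the zero of $z^s-A(z)$ in $1<|z|<r$ satisfying $Z_k=1+\frac{a_0}{\sqrt s}\big(b_0+\sqrt{b_0^2-2\pi i k}\big)+O\big(\frac{1+|k|}{s}\big)$ (principal square root). Then, when $k=o(s)$, $$-\frac{s-\mu_A}{sZ_k^{s-1}-A'(Z_k)}=\frac{b_0}{\sqrt{b_0^2-2\pi i k}}\,\frac{1}{Z_k^{s-1}}\Big(1+O\Big(\frac{1+|k|}{\sqrt s}\Big)\Big),\qquad s\to\infty.$$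
   Context: $O$-terms refer to $s\to\infty$ with constants independent of $s$ and $k$. *)

From Stdlib Require Import Reals.
From Coquelicot Require Import Coquelicot.
Open Scope R_scope.

Fixpoint cpow (z : C) (n : nat) : C :=
  match n with
  | O => RtoC 1
  | S m => Cmult z (cpow z m)
  end.

Definition pgf (p : nat -> R) (z : C) : C :=
  (Series (fun j => p j * Re (cpow z j)), Series (fun j => p j * Im (cpow z j))).

Definition is_distribution (p : nat -> R) : Prop :=
  (forall j, 0 <= p j) /\ is_series p 1.

Definition pgf_mean (p : nat -> R) : R := Series (fun j => INR j * p j).

Definition pgf_d2 (p : nat -> R) : R := Series (fun j => INR j * (INR j - 1) * p j).

Definition pgf_var (p : nat -> R) : R :=
  pgf_d2 p - (pgf_mean p) ^ 2 + pgf_mean p.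

(* Principal square root of a complex number (branch cut on the negative
   real axis; on the cut the root with positive imaginary part). *)
Definition csqrt (w : C) : C :=
  (sqrt ((Cmod w + Re w) / 2),
   if Rle_dec 0 (Im w) then sqrt ((Cmod w - Re w) / 2)
   else - sqrt ((Cmod w - Re w) / 2)).

From Stdlib Require Import Reals ZArith Lra Psatz.
From Coquelicot Require Import Coquelicot.
Open Scope R_scope.

(* Write w = Z_k - 1 and L = Z_k X'(Z_k) / X(Z_k).  Since Z_k^s = X(Z_k)^n, the derivative
   A' = n X^(n-1) X' gives s Z_k^(s-1) - A'(Z_k) = - Z_k^(s-1) (n L - s), so everything reduces
   to the expansion n L - s = (s - n mu) sqrt(b0^2 - 2 pi i k) / b0 * (1 + O((1 + |k|) / sqrt s)).
   On a disc of radius > 1 the PGF satisfies L = mu + sigma^2 w + O(|w|^2) uniformly, and the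
   assumed expansion of Z_k makes w of order u = sqrt((1 + |k|) / s).  Substituting
   n = (s - gamma sqrt s) / mu and a0 b0 sigma^2 = gamma mu, the terms of size sqrt s reproduce
   the main term, of modulus of order (1 + |k|) / u, and leave a remainder O(1 + |k|); the
   relative error is therefore O(u), which is O((1 + |k|) / sqrt s).
   The aperiodicity and degree hypotheses serve in the paper to locate the zeros Z_k; here
   Z_k is given together with its expansion. *)

(** * Complex powers *)

Lemma Cmod_cpow (z : C) (n : nat) : Cmod (cpow z n) = Cmod z ^ n.
Proof. induction n as [|n IH]; simpl; [apply Cmod_1|now rewrite Cmod_mult, IH]. Qed.

Lemma cpow_1 (n : nat) : cpow 1 n = 1.
Proof. induction n as [|n IH]; simpl; [easy|rewrite IH; ring]. Qed.

Lemma cpow_neq0 (z : C) (n : nat) : z <> 0 -> cpow z n <> 0.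
Proof.
  intros Hz. apply Cmod_gt_0. rewrite Cmod_cpow. apply pow_lt. now apply Cmod_gt_0.
Qed.

Lemma Cmod_cpow_le (z : C) (M : R) (n : nat) : Cmod z <= M -> Cmod (cpow z n) <= M ^ n.
Proof. intros Hz. rewrite Cmod_cpow. apply pow_incr. split; [apply Cmod_ge_0|exact Hz]. Qed.

Lemma cpow_pred (z : C) (m : nat) : (0 < m)%nat -> cpow z m = (z * cpow z (m - 1))%C.
Proof. intros Hm. destruct m as [|m]; [lia|]. simpl. now rewrite Nat.sub_0_r. Qed.

Section CpowDifferences.
Variables (a b : C) (M : R).
Hypotheses (Ha : Cmod a <= M) (Hb : Cmod b <= M) (HM : 1 <= M).

Lemma Cmod_cpow_sub (j : nat) :
  Cmod (cpow a j - cpow b j) <= INR j * Cmod (a - b) * M ^ j.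
Proof.
  induction j as [|j IH].
  { simpl. replace (1 - 1)%C with (RtoC 0) by ring. rewrite Cmod_0. lra. }
  replace (cpow a (S j) - cpow b (S j))%C
    with (a * (cpow a j - cpow b j) + (a - b) * cpow b j)%C by (simpl; ring).
  eapply Rle_trans; [apply Cmod_triangle|]. rewrite !Cmod_mult.
  pose proof (Cmod_cpow_le b M j Hb). pose proof (Cmod_ge_0 (a - b)).
  pose proof (Cmod_ge_0 (cpow a j - cpow b j)). pose proof (pos_INR j).
  assert (M ^ j <= M ^ S j) by (apply Rle_pow; auto).
  rewrite S_INR; simpl pow in *.
  assert (Cmod a * Cmod (cpow a j - cpow b j) <= M * (INR j * Cmod (a - b) * M ^ j))
    by (apply Rmult_le_compat; auto using Cmod_ge_0).
  nra.
Qed.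

Lemma Cmod_cpow_sub_linear (j : nat) :
  Cmod (cpow a j - cpow b j - INR j * cpow b (j - 1) * (a - b))
    <= INR j ^ 2 * Cmod (a - b) ^ 2 * M ^ j.
Proof.
  induction j as [|[|j] IH].
  - simpl. replace (1 - 1 - 0 * 1 * (a - b))%C with (RtoC 0) by ring. rewrite Cmod_0. lra.
  - simpl. replace (a * 1 - b * 1 - 1 * 1 * (a - b))%C with (RtoC 0) by ring.
    rewrite Cmod_0. pose proof (Cmod_ge_0 (a - b)). nra.
  - replace (S (S j) - 1)%nat with (S j) by lia. replace (S j - 1)%nat with j in IH by lia.
    replace (cpow a (S (S j)) - cpow b (S (S j)) - INR (S (S j)) * cpow b (S j) * (a - b))%C
      with (a * (cpow a (S j) - cpow b (S j) - INR (S j) * cpow b j * (a - b))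
            + INR (S j) * (a - b) ^ 2 * cpow b j)%C
      by (rewrite (S_INR (S j)), RtoC_plus; simpl; ring).
    eapply Rle_trans; [apply Cmod_triangle|].
    rewrite !Cmod_mult, Cmod_R, Rabs_right by (apply Rle_ge, pos_INR).
    replace (Cmod ((a - b) ^ 2)) with (Cmod (a - b) ^ 2)
      by (simpl; rewrite !Cmod_mult, Cmod_1; ring).
    set (d := Cmod (a - b)) in *. set (e := Cmod _) in IH |- *.
    pose proof (Cmod_cpow_le b M j Hb). pose proof (Cmod_ge_0 (a - b)).
    pose proof (Cmod_ge_0 a). assert (0 <= e) by apply Cmod_ge_0.
    assert (M ^ j <= M ^ S (S j)) by (apply Rle_pow; auto).
    assert (M ^ S j <= M ^ S (S j)) by (apply Rle_pow; auto).
    assert (0 <= M ^ j) by (apply pow_le; lra).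
    assert (0 <= INR j) by apply pos_INR.
    rewrite !S_INR in *. simpl pow in *.
    assert (Hfirst : Cmod a * e
                     <= M * ((INR j + 1) * ((INR j + 1) * 1) * (d * (d * 1)) * (M * M ^ j)))
      by (apply Rmult_le_compat; auto).
    assert (Hsecond : (INR j + 1) * (d * (d * 1)) * Cmod (cpow b j)
                      <= (INR j + 1) * (d * (d * 1)) * (M * (M * M ^ j))).
    { apply Rmult_le_compat_l; [|lra]. apply Rmult_le_pos; nra. }
    set (Q := d * d * (M * (M * M ^ j))).
    assert (0 <= Q) by (apply Rmult_le_pos; nra).
    assert (Cmod a * e <= (INR j + 1) ^ 2 * Q)
      by (eapply Rle_trans; [exact Hfirst|right; unfold Q; ring]).
    assert ((INR j + 1) * (d * (d * 1)) * Cmod (cpow b j) <= (INR j + 1) * Q)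
      by (eapply Rle_trans; [exact Hsecond|right; unfold Q; ring]).
    replace ((INR j + 1 + 1) * ((INR j + 1 + 1) * 1) * (d * (d * 1)) * (M * (M * M ^ j)))
      with ((INR j + 2) ^ 2 * Q) by (unfold Q; ring).
    nra.
Qed.

End CpowDifferences.

(** * Absolutely convergent complex series *)

Definition csum (t : nat -> C) : C :=
  (Series (fun j => Re (t j)), Series (fun j => Im (t j))).

Definition abs_summable (t : nat -> C) : Prop := ex_series (fun j => Cmod (t j)).

Lemma Series_zero : Series (fun _ => 0) = 0.
Proof.
  rewrite (Series_ext _ (fun n => 0 * 0)) by (intros; ring).
  rewrite Series_scal_l. ring.
Qed.

Lemma Series_nonneg (a : nat -> R) : (forall j, 0 <= a j) -> ex_series a -> 0 <= Series a.
Proof.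
  intros Ha Hs. rewrite <- Series_zero. apply Series_le; auto. intros j; split; [lra|auto].
Qed.

Lemma ex_series_Rle (a b : nat -> R) : (forall j, Rabs (a j) <= b j) -> ex_series b -> ex_series a.
Proof. intros H Hb. exact (ex_series_le a b H Hb). Qed.

Lemma abs_summable_le (t : nat -> C) (b : nat -> R) :
  (forall j, Cmod (t j) <= b j) -> ex_series b -> abs_summable t.
Proof.
  intros H Hb. apply (ex_series_Rle _ b); auto.
  intros j. rewrite Rabs_right; [apply H|apply Rle_ge, Cmod_ge_0].
Qed.

Lemma ex_series_Re (t : nat -> C) : abs_summable t -> ex_series (fun j => Re (t j)).
Proof. intros H. apply (ex_series_Rle _ _ (fun j => re_le_Cmod (t j)) H). Qed.

Lemma abs_Im_le_Cmod (c : C) : Rabs (Im c) <= Cmod c.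
Proof.
  destruct c as [x y]. unfold Cmod, Im; simpl. rewrite <- sqrt_Rsqr_abs.
  apply sqrt_le_1_alt. unfold Rsqr. nra.
Qed.

Lemma ex_series_Im (t : nat -> C) : abs_summable t -> ex_series (fun j => Im (t j)).
Proof. intros H. apply (ex_series_Rle _ _ (fun j => abs_Im_le_Cmod (t j)) H). Qed.

Lemma csum_ext (t u : nat -> C) : (forall j, t j = u j) -> csum t = csum u.
Proof. intros H. unfold csum. f_equal; apply Series_ext; intros; now rewrite H. Qed.

Lemma csum_RtoC (f : nat -> R) : csum (fun j => RtoC (f j)) = RtoC (Series f).
Proof. unfold csum, RtoC. simpl. now rewrite Series_zero. Qed.

Lemma ex_series_lin (x y : R) (f g : nat -> R) : ex_series f -> ex_series g ->
  ex_series (fun j => x * f j + y * g j).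
Proof. intros Hf Hg. exact (ex_series_plus _ _ (ex_series_scal_l x f Hf) (ex_series_scal_l y g Hg)). Qed.

Lemma Series_lin (x y : R) (f g : nat -> R) : ex_series f -> ex_series g ->
  Series (fun j => x * f j + y * g j) = x * Series f + y * Series g.
Proof.
  intros Hf Hg. rewrite Series_plus, !Series_scal_l; auto.
  - exact (ex_series_scal_l x f Hf).
  - exact (ex_series_scal_l y g Hg).
Qed.

Lemma csum_lin (a b : C) (t u : nat -> C) : abs_summable t -> abs_summable u ->
  csum (fun j => a * t j + b * u j)%C = (a * csum t + b * csum u)%C.
Proof.
  intros Ht Hu.
  pose proof (ex_series_Re t Ht). pose proof (ex_series_Im t Ht).
  pose proof (ex_series_Re u Hu). pose proof (ex_series_Im u Hu).
  destruct a as [a1 a2], b as [b1 b2]. unfold csum.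
  apply injective_projections; simpl.
  - rewrite (Series_ext _ (fun j => 1 * (a1 * Re (t j) + (- a2) * Im (t j))
                                  + 1 * (b1 * Re (u j) + (- b2) * Im (u j))))
      by (intros; unfold Re, Im; simpl; ring).
    rewrite !Series_lin by auto using ex_series_lin. ring.
  - rewrite (Series_ext _ (fun j => 1 * (a1 * Im (t j) + a2 * Re (t j))
                                  + 1 * (b1 * Im (u j) + b2 * Re (u j))))
      by (intros; unfold Re, Im; simpl; ring).
    rewrite !Series_lin by auto using ex_series_lin. ring.
Qed.

Lemma csum_sub (t u : nat -> C) : abs_summable t -> abs_summable u ->
  csum (fun j => t j - u j)%C = (csum t - csum u)%C.
Proof.
  intros Ht Hu. rewrite <- (Cmult_1_l (csum t)), <- (Cmult_1_l (csum u)).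
  replace (1 * csum t - 1 * csum u)%C with (1 * csum t + (-1) * csum u)%C by ring.
  rewrite <- csum_lin by auto. apply csum_ext. intros; ring.
Qed.

Lemma csum_scal (c : C) (t : nat -> C) : abs_summable t ->
  csum (fun j => c * t j)%C = (c * csum t)%C.
Proof.
  intros Ht. replace (c * csum t)%C with (c * csum t + 0 * csum t)%C by ring.
  rewrite <- csum_lin by auto. apply csum_ext. intros; ring.
Qed.

Lemma abs_summable_lin (a b : C) (t u : nat -> C) : abs_summable t -> abs_summable u ->
  abs_summable (fun j => a * t j + b * u j)%C.
Proof.
  intros Ht Hu. apply (abs_summable_le _ (fun j => Cmod a * Cmod (t j) + Cmod b * Cmod (u j))).
  - intros j. eapply Rle_trans; [apply Cmod_triangle|]. rewrite !Cmod_mult. lra.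
  - now apply ex_series_lin.
Qed.

Lemma Cmod_csum_le (t : nat -> C) : abs_summable t ->
  Cmod (csum t) <= Series (fun j => Cmod (t j)).
Proof.
  intros Ht. set (c := csum t).
  destruct (Req_dec (Cmod c) 0) as [Hc0|Hc0].
  { rewrite Hc0. apply Series_nonneg; auto. intros; apply Cmod_ge_0. }
  assert (Hc : 0 < Cmod c) by (pose proof (Cmod_ge_0 c); lra).
  (* project onto the direction of [c]: Cmod c = Re c * u1 + Im c * u2 *)
  set (u1 := Re c / Cmod c). set (u2 := Im c / Cmod c).
  pose proof (Cmod2_alt c) as Hc2.
  assert (Hu : sqrt (u1 * u1 + u2 * u2) = 1).
  { replace (u1 * u1 + u2 * u2) with 1; [apply sqrt_1|].
    unfold u1, u2. field_simplify; [|lra]. rewrite <- Hc2. field. lra. }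
  pose proof (ex_series_Re t Ht). pose proof (ex_series_Im t Ht).
  set (a := fun j => Re (t j) * u1 + Im (t j) * u2).
  assert (Ha : forall j, Rabs (a j) <= Cmod (t j)).
  { intros j. unfold a. destruct (t j) as [x y]. unfold Cmod, Re, Im; simpl.
    pose proof (sqrt_cauchy x y u1 u2). pose proof (sqrt_cauchy (- x) (- y) u1 u2).
    unfold Rsqr in *. rewrite Hu in *. replace ((- x) * (- x)) with (x * x) in * by ring.
    replace ((- y) * (- y)) with (y * y) in * by ring. apply Rabs_le.
    replace (x * (x * 1) + y * (y * 1)) with (x * x + y * y) by ring. lra. }
  assert (Ec : Cmod c = Series a).
  { unfold a. rewrite (Series_ext _ (fun j => u1 * Re (t j) + u2 * Im (t j))) by (intros; ring).
    rewrite Series_lin by auto.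
    change (Series (fun j => Re (t j))) with (Re c). change (Series (fun j => Im (t j))) with (Im c).
    unfold u1, u2. field_simplify; [|lra]. rewrite <- Hc2. field. lra. }
  rewrite Ec. eapply Rle_trans; [apply Rle_abs|]. eapply Rle_trans; [apply Series_Rabs|].
  - apply (ex_series_Rle _ _ (fun j => Rle_trans _ _ _ (Req_le _ _ (Rabs_Rabsolu _)) (Ha j)) Ht).
  - apply Series_le; auto. intros j; split; [apply Rabs_pos|apply Ha].
Qed.

Lemma is_derive_C_eq_of_quadratic (f : C -> C) (Z dA D : C) (K delta : R) :
  0 < delta -> (forall h : R, 0 < h <= delta -> Cmod (f (Z + h) - f Z - h * D)%C <= K * h ^ 2) ->
  is_derive (K := C_AbsRing) (V := C_NormedModule) f Z dA -> dA = D.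
Proof.
  intros Hdelta Hquad [_ Hd]. apply Ceq_minus, Cmod_eq_0.
  destruct (Req_dec (Cmod (dA - D)) 0) as [|Hne]; auto. exfalso.
  set (c := Cmod (dA - D)) in *.
  assert (Hc : 0 < c) by (pose proof (Cmod_ge_0 (dA - D)); unfold c in *; lra).
  assert (Hc4 : 0 < c / 4) by lra.
  destruct (Hd Z (fun P H => H) (mkposreal _ Hc4)) as [eps Heps].
  pose proof (cond_pos eps) as Heps0.
  (* a small real step [h] for which both approximations hold but [c h] dominates their sum *)
  set (h := Rmin (eps / 2) (Rmin delta (c / (4 * (Rabs K + 1))))).
  assert (Hh : 0 < h) by (unfold h; repeat apply Rmin_pos; try lra;
                          apply Rdiv_lt_0_compat; pose proof (Rabs_pos K); lra).
  assert (Hh1 : h <= eps / 2) by apply Rmin_l.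
  assert (Hh2 : h <= delta) by (eapply Rle_trans; [apply Rmin_r|apply Rmin_l]).
  assert (Hh3 : h <= c / (4 * (Rabs K + 1))) by (eapply Rle_trans; [apply Rmin_r|apply Rmin_r]).
  assert (Hhz : Cmod (Z + h - Z)%C = h).
  { replace (Z + h - Z)%C with (RtoC h) by ring. rewrite Cmod_R, Rabs_right; lra. }
  specialize (Heps (Z + h)%C).
  assert (Hball : @ball (AbsRing_UniformSpace C_AbsRing) Z eps (Z + h)%C).
  { change (Cmod (Z + h - Z)%C < eps). lra. }
  specialize (Heps Hball).
  change (Cmod (f (Z + h) - f Z - (Z + h - Z) * dA)%C <= c / 4 * Cmod (Z + h - Z)%C) in Heps.
  rewrite Hhz in Heps. replace (Z + h - Z)%C with (RtoC h) in Heps by ring.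
  pose proof (Hquad h (conj Hh Hh2)) as Hq.
  assert (Htri : h * c <= Cmod (f (Z + h) - f Z - h * D)%C + Cmod (f (Z + h) - f Z - h * dA)%C).
  { replace (h * c) with (Cmod (h * (dA - D))%C)
      by (unfold c; rewrite Cmod_mult, Cmod_R, Rabs_right by lra; reflexivity).
    replace (h * (dA - D))%C
      with ((f (Z + h) - f Z - h * D) - (f (Z + h) - f Z - h * dA))%C by ring.
    unfold Cminus at 1. eapply Rle_trans; [apply Cmod_triangle|]. rewrite Cmod_opp. lra. }
  assert (HKh : K * h <= c / 4).
  { apply Rle_trans with ((Rabs K + 1) * h); [pose proof (Rle_abs K); nra|].
    apply Rle_trans with ((Rabs K + 1) * (c / (4 * (Rabs K + 1))));
      [apply Rmult_le_compat_l; pose proof (Rabs_pos K); lra|].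
    right. field. pose proof (Rabs_pos K). lra. }
  nra.
Qed.

Lemma pow_le_succ_cube (x : R) (m : nat) : 0 <= x -> (m <= 3)%nat -> x ^ m <= (1 + x) ^ 3.
Proof.
  intros Hx Hm. apply Rle_trans with ((1 + x) ^ m); [apply pow_incr; lra|apply Rle_pow; auto; lra].
Qed.

(** * The PGF on a disc of radius greater than 1 *)

(* Dominates p_j j^m z^i for m <= 3, i <= j and |z| <= rad; the cube is needed because the
   second-order remainder of z X'(z) carries a factor j^3. *)
Definition pgf_weight (p : nat -> R) (rad : R) (j : nat) : R := p j * (1 + INR j) ^ 3 * rad ^ j.

Definition pgf_deriv (p : nat -> R) (z : C) : C :=
  csum (fun j => p j * (INR j * cpow z (j - 1)))%C.

Lemma pgf_csum (p : nat -> R) (z : C) : pgf p z = csum (fun j => p j * cpow z j)%C.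
Proof. unfold pgf, csum. f_equal; apply Series_ext; intros j; unfold Re, Im; simpl; ring. Qed.

Definition pgf_near_one_radius (p : nat -> R) (rad : R) : R :=
  Rmin ((rad - 1) / 2) (1 / (2 * Series (pgf_weight p rad) + 2)).

Section PgfOnDisc.
Variable p : nat -> R.
Hypothesis p_nonneg : forall j, 0 <= p j.
Variable rad : R.
Hypothesis rad_ge1 : 1 <= rad.
Hypothesis weight_summable : ex_series (pgf_weight p rad).

Lemma pgf_weight_ge (j i : nat) (c x : R) :
  0 <= c <= (1 + INR j) ^ 3 -> 0 <= x <= rad -> (i <= j)%nat ->
  p j * c * x ^ i <= pgf_weight p rad j.
Proof.
  intros Hc Hx Hij. unfold pgf_weight. rewrite !Rmult_assoc.
  apply Rmult_le_compat_l; [apply p_nonneg|].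
  apply Rmult_le_compat; try lra; [apply pow_le; lra|].
  apply Rle_trans with (rad ^ i); [apply pow_incr; lra|apply Rle_pow; auto].
Qed.

Lemma pgf_weight_ge_poly (j : nat) : p j * (1 + INR j) ^ 3 <= pgf_weight p rad j.
Proof.
  rewrite <- (Rmult_1_r (_ * _)), <- (pow1 0). apply pgf_weight_ge; try lra; try lia.
  pose proof (pos_INR j). split; [apply pow_le; lra|lra].
Qed.

Lemma pgf_weight_nonneg (j : nat) : 0 <= pgf_weight p rad j.
Proof.
  unfold pgf_weight. pose proof (pos_INR j). pose proof (p_nonneg j).
  apply Rmult_le_pos; [apply Rmult_le_pos|]; try apply pow_le; lra.
Qed.

Lemma abs_summable_dominated (t : nat -> C) (c : R) :
  (forall j, Cmod (t j) <= c * pgf_weight p rad j) -> abs_summable t.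
Proof.
  intros H. apply (abs_summable_le _ _ H). exact (ex_series_scal_l c _ weight_summable).
Qed.

Lemma Cmod_csum_dominated (t : nat -> C) (c : R) :
  (forall j, Cmod (t j) <= c * pgf_weight p rad j) ->
  Cmod (csum t) <= c * Series (pgf_weight p rad).
Proof.
  intros H. eapply Rle_trans; [apply Cmod_csum_le, (abs_summable_dominated _ _ H)|].
  rewrite <- Series_scal_l. apply Series_le; [|exact (ex_series_scal_l c _ weight_summable)].
  intros j; split; [apply Cmod_ge_0|apply H].
Qed.

Lemma Cmod_pgf_term_le (z : C) (j : nat) :
  Cmod z <= rad -> Cmod (p j * cpow z j)%C <= pgf_weight p rad j.
Proof.
  intros Hz. rewrite Cmod_mult, Cmod_R, Rabs_right, Cmod_cpow by (apply Rle_ge, p_nonneg).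
  rewrite <- (Rmult_1_r (p j)) at 1. apply pgf_weight_ge; auto.
  - pose proof (pos_INR j). split; [lra|]. rewrite <- (pow1 3). apply pow_incr. lra.
  - split; auto. apply Cmod_ge_0.
Qed.

Lemma Cmod_pgf_deriv_term_le (z : C) (j i : nat) :
  Cmod z <= rad -> (i <= j)%nat ->
  Cmod (p j * (INR j * cpow z i))%C <= pgf_weight p rad j.
Proof.
  intros Hz Hij. rewrite !Cmod_mult, !Cmod_R, !Rabs_right, Cmod_cpow, <- Rmult_assoc
    by (apply Rle_ge; apply p_nonneg || apply pos_INR).
  apply pgf_weight_ge; auto.
  - pose proof (pos_INR j). split; [lra|nra].
  - split; auto. apply Cmod_ge_0.
Qed.

Lemma Cmod_pgf_le (z : C) : Cmod z <= rad -> Cmod (pgf p z) <= Series (pgf_weight p rad).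
Proof.
  intros Hz. rewrite pgf_csum, <- (Rmult_1_l (Series _)).
  apply Cmod_csum_dominated. intros j. rewrite Rmult_1_l. now apply Cmod_pgf_term_le.
Qed.

Lemma pgf_lipschitz (z z' : C) : Cmod z <= rad -> Cmod z' <= rad ->
  Cmod (pgf p z' - pgf p z) <= Series (pgf_weight p rad) * Cmod (z' - z).
Proof.
  intros Hz Hz'. rewrite !pgf_csum, <- csum_sub, Rmult_comm
    by (apply (abs_summable_dominated _ 1); intros; rewrite Rmult_1_l; now apply Cmod_pgf_term_le).
  apply Cmod_csum_dominated. intros j.
  replace (p j * cpow z' j - p j * cpow z j)%C with (p j * (cpow z' j - cpow z j))%C by ring.
  rewrite Cmod_mult, Cmod_R, Rabs_right by (apply Rle_ge, p_nonneg).
  eapply Rle_trans.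
  { apply Rmult_le_compat_l; [apply p_nonneg|apply (Cmod_cpow_sub z' z rad); auto]. }
  pose proof (Cmod_ge_0 (z' - z)). pose proof (pos_INR j).
  replace (p j * (INR j * Cmod (z' - z) * rad ^ j))
    with (Cmod (z' - z) * (p j * INR j * rad ^ j)) by ring.
  apply Rmult_le_compat_l; auto. apply pgf_weight_ge; auto; lra || nra.
Qed.

Lemma pgf_taylor (z z' : C) : Cmod z <= rad -> Cmod z' <= rad ->
  Cmod (pgf p z' - pgf p z - pgf_deriv p z * (z' - z))
    <= Series (pgf_weight p rad) * Cmod (z' - z) ^ 2.
Proof.
  intros Hz Hz'.
  assert (HX : forall w, Cmod w <= rad -> abs_summable (fun j => p j * cpow w j)%C)
    by (intros w Hw; apply (abs_summable_dominated _ 1); intros; rewrite Rmult_1_l; now apply Cmod_pgf_term_le).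
  assert (HX' : abs_summable (fun j => p j * (INR j * cpow z (j - 1)))%C)
    by (apply (abs_summable_dominated _ 1); intros; rewrite Rmult_1_l; apply Cmod_pgf_deriv_term_le; auto; lia).
  assert (Hdiff : abs_summable (fun j => p j * cpow z' j - p j * cpow z j)%C).
  { apply (abs_summable_dominated _ 2). intros j. eapply Rle_trans; [apply Cmod_triangle|].
    rewrite Cmod_opp. pose proof (Cmod_pgf_term_le z' j Hz'). pose proof (Cmod_pgf_term_le z j Hz). lra. }
  assert (Hlin : abs_summable (fun j => (z' - z) * (p j * (INR j * cpow z (j - 1))))%C).
  { apply (abs_summable_dominated _ (Cmod (z' - z))). intros j. rewrite Cmod_mult.
    apply Rmult_le_compat_l; [apply Cmod_ge_0|]. apply Cmod_pgf_deriv_term_le; auto; lia. }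
  unfold pgf_deriv. rewrite !pgf_csum, <- csum_sub, Cmult_comm, <- csum_scal, <- csum_sub by auto.
  rewrite Rmult_comm. apply Cmod_csum_dominated. intros j.
  replace (p j * cpow z' j - p j * cpow z j - (z' - z) * (p j * (INR j * cpow z (j - 1))))%C
    with (p j * (cpow z' j - cpow z j - INR j * cpow z (j - 1) * (z' - z)))%C by ring.
  rewrite Cmod_mult, Cmod_R, Rabs_right by (apply Rle_ge, p_nonneg).
  eapply Rle_trans.
  { apply Rmult_le_compat_l; [apply p_nonneg|apply (Cmod_cpow_sub_linear z' z rad); auto]. }
  pose proof (pow2_ge_0 (Cmod (z' - z))). pose proof (pos_INR j).
  replace (p j * (INR j ^ 2 * Cmod (z' - z) ^ 2 * rad ^ j))
    with (Cmod (z' - z) ^ 2 * (p j * INR j ^ 2 * rad ^ j)) by ring.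
  apply Rmult_le_compat_l; auto. apply pgf_weight_ge; auto; lra || nra.
Qed.

Lemma Cmult_pgf_deriv (z : C) : Cmod z <= rad ->
  (z * pgf_deriv p z)%C = csum (fun j => p j * (INR j * cpow z j))%C.
Proof.
  intros Hz. unfold pgf_deriv. rewrite <- csum_scal.
  - apply csum_ext. intros [|j]; [simpl; ring|].
    replace (S j - 1)%nat with j by lia. simpl cpow. ring.
  - apply (abs_summable_dominated _ 1). intros j. rewrite Rmult_1_l.
    apply Cmod_pgf_deriv_term_le; auto. lia.
Qed.

Lemma ex_series_moment (m : nat) : (m <= 3)%nat -> ex_series (fun j => INR j ^ m * p j).
Proof.
  intros Hm. apply (ex_series_Rle _ (pgf_weight p rad)); [intros j|exact weight_summable].
  pose proof (pos_INR j) as Hj. pose proof (p_nonneg j). pose proof (pgf_weight_ge_poly j).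
  pose proof (pow_le_succ_cube _ m Hj Hm). assert (0 <= INR j ^ m) by (apply pow_le; lra).
  rewrite Rabs_right by (apply Rle_ge, Rmult_le_pos; auto). nra.
Qed.

Lemma pgf_weight_Series_nonneg : 0 <= Series (pgf_weight p rad).
Proof. apply Series_nonneg; auto. apply pgf_weight_nonneg. Qed.

Lemma cpow_pgf_quadratic (n : nat) (Z : C) : Cmod Z <= rad ->
  exists K, forall h : R, 0 < h -> Cmod Z + h <= rad ->
    Cmod (cpow (pgf p (Z + h)) n - cpow (pgf p Z) n
          - h * (INR n * cpow (pgf p Z) (n - 1) * pgf_deriv p Z))%C <= K * h ^ 2.
Proof.
  intros HZ. pose proof pgf_weight_Series_nonneg as HW.
  set (W := Series (pgf_weight p rad)) in *. set (M := W + 1).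
  assert (HM : 1 <= M) by (unfold M; lra).
  assert (HMn : 0 <= M ^ n) by (apply pow_le; lra).
  pose proof (pos_INR n) as Hn.
  exists (INR n ^ 2 * W ^ 2 * M ^ n + INR n * M ^ n * W). intros h Hh HZh.
  set (y := (Z + h)%C).
  assert (Hyz : Cmod (y - Z) = h).
  { replace (y - Z)%C with (RtoC h) by (unfold y; ring). rewrite Cmod_R, Rabs_right; lra. }
  assert (Hy : Cmod y <= rad).
  { unfold y. eapply Rle_trans; [apply Cmod_triangle|]. rewrite Cmod_R, Rabs_right; lra. }
  set (a := pgf p y). set (b := pgf p Z).
  assert (Ha : Cmod a <= M) by (pose proof (Cmod_pgf_le y Hy); unfold a, M, W in *; lra).
  assert (Hb : Cmod b <= M) by (pose proof (Cmod_pgf_le Z HZ); unfold b, M, W in *; lra).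
  pose proof (pgf_lipschitz Z y HZ Hy) as L1.
  pose proof (pgf_taylor Z y HZ Hy) as L2.
  rewrite Hyz in L1, L2. fold W a b in L1, L2.
  replace (y - Z)%C with (RtoC h) in L2 by (unfold y; ring).
  pose proof (Cmod_cpow_sub_linear a b M Ha Hb HM n) as L3.
  replace (cpow a n - cpow b n - h * (INR n * cpow b (n - 1) * pgf_deriv p Z))%C
    with ((cpow a n - cpow b n - INR n * cpow b (n - 1) * (a - b))
          + INR n * cpow b (n - 1) * (a - b - pgf_deriv p Z * h))%C by ring.
  eapply Rle_trans; [apply Cmod_triangle|].
  rewrite !Cmod_mult, Cmod_R, Rabs_right by (apply Rle_ge, pos_INR).
  assert (Hbn : Cmod (cpow b (n - 1)) <= M ^ n).
  { eapply Rle_trans; [apply Cmod_cpow_le, Hb|]. apply Rle_pow; auto; lia. }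
  assert (Hab : Cmod (a - b) ^ 2 <= (W * h) ^ 2) by (apply pow_incr; split; [apply Cmod_ge_0|lra]).
  rewrite Rmult_plus_distr_r. apply Rplus_le_compat.
  - eapply Rle_trans; [exact L3|].
    replace (INR n ^ 2 * W ^ 2 * M ^ n * h ^ 2) with (INR n ^ 2 * (W * h) ^ 2 * M ^ n) by ring.
    apply Rmult_le_compat_r; auto. apply Rmult_le_compat_l; auto. apply pow2_ge_0.
  - replace (INR n * M ^ n * W * h ^ 2) with (INR n * M ^ n * (W * h ^ 2)) by ring.
    apply Rmult_le_compat; auto using Cmod_ge_0. apply Rmult_le_pos; auto using Cmod_ge_0.
    apply Rmult_le_compat_l; auto.
Qed.

Lemma pgf_power_derivative (n : nat) (Z dA : C) : Cmod Z < rad ->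
  is_derive (K := C_AbsRing) (V := C_NormedModule) (fun z => cpow (pgf p z) n) Z dA ->
  dA = (INR n * cpow (pgf p Z) (n - 1) * pgf_deriv p Z)%C.
Proof.
  intros HZ. destruct (cpow_pgf_quadratic n Z ltac:(lra)) as [K HK].
  apply (is_derive_C_eq_of_quadratic _ _ _ _ K (rad - Cmod Z)); [lra|].
  intros h [Hh Hh']. apply HK; lra.
Qed.

Lemma Rabs_quadratic_term_le (a b c : R) (j : nat) :
  Rabs (p j * (a * INR j ^ 2 + b * INR j + c)) <= (Rabs a + Rabs b + Rabs c) * pgf_weight p rad j.
Proof.
  rewrite Rabs_mult, (Rabs_right (p j)) by (apply Rle_ge, p_nonneg).
  pose proof (pgf_weight_ge_poly j) as Hw. pose proof (pos_INR j) as Hj. pose proof (p_nonneg j).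
  assert (Hq : Rabs (a * INR j ^ 2 + b * INR j + c)
               <= (Rabs a + Rabs b + Rabs c) * (1 + INR j) ^ 3).
  { eapply Rle_trans; [apply Rabs_triang|].
    eapply Rle_trans; [apply Rplus_le_compat_r, Rabs_triang|].
    rewrite !Rabs_mult, (Rabs_right (INR j)), (Rabs_right (INR j ^ 2)) by (apply Rle_ge; try apply pow_le; lra).
    pose proof (Rmult_le_compat_l _ _ _ (Rabs_pos a) (pow_le_succ_cube _ 2 Hj ltac:(lia))).
    pose proof (Rmult_le_compat_l _ _ _ (Rabs_pos b) (pow_le_succ_cube _ 1 Hj ltac:(lia))).
    pose proof (Rmult_le_compat_l _ _ _ (Rabs_pos c) (pow_le_succ_cube _ 0 Hj ltac:(lia))).
    simpl pow in *. lra. }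
  apply Rle_trans with (p j * ((Rabs a + Rabs b + Rabs c) * (1 + INR j) ^ 3));
    [now apply Rmult_le_compat_l|].
  rewrite Rmult_comm, Rmult_assoc. apply Rmult_le_compat_l; [|lra].
  pose proof (Rabs_pos a). pose proof (Rabs_pos b). pose proof (Rabs_pos c). lra.
Qed.

Lemma Cmod_logderiv_term_le (mu v : R) (w : C) (j : nat) : Cmod (1 + w) <= rad ->
  Cmod (p j * ((INR j - mu) * (cpow (1 + w) j - 1 - INR j * w) - v * w * (cpow (1 + w) j - 1)))%C
    <= (1 + Rabs mu + Rabs v) * Cmod w ^ 2 * pgf_weight p rad j.
Proof.
  intros HZ. set (Z := (1 + w)%C) in *.
  assert (HZ1 : Cmod (RtoC 1) <= rad) by (rewrite Cmod_1; lra).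
  pose proof (Cmod_cpow_sub_linear Z 1 rad HZ HZ1 rad_ge1 j) as D2.
  pose proof (Cmod_cpow_sub Z 1 rad HZ HZ1 rad_ge1 j) as D1.
  rewrite !cpow_1 in D2. rewrite cpow_1 in D1. replace (Z - 1)%C with w in D1, D2 by (unfold Z; ring).
  replace (INR j * 1 * w)%C with (INR j * w)%C in D2 by ring.
  rewrite Cmod_mult, Cmod_R, Rabs_right by (apply Rle_ge, p_nonneg).
  assert (Hj : Rabs (INR j - mu) <= INR j + Rabs mu)
    by (eapply Rle_trans; [apply Rabs_triang|]; rewrite Rabs_Ropp, Rabs_right; [lra|apply Rle_ge, pos_INR]).
  assert (Ht : Cmod ((INR j - mu) * (cpow Z j - 1 - INR j * w) - v * w * (cpow Z j - 1))%C
               <= (INR j + Rabs mu) * (INR j ^ 2 * Cmod w ^ 2 * rad ^ j)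
                  + Rabs v * Cmod w * (INR j * Cmod w * rad ^ j)).
  { unfold Cminus at 1. eapply Rle_trans; [apply Cmod_triangle|].
    rewrite Cmod_opp, !Cmod_mult, <- RtoC_minus, !Cmod_R.
    apply Rplus_le_compat; apply Rmult_le_compat; auto using Rabs_pos, Cmod_ge_0.
    - apply Rmult_le_pos; apply Rabs_pos || apply Cmod_ge_0.
    - lra. }
  unfold pgf_weight. pose proof (pos_INR j) as Hj0. pose proof (p_nonneg j).
  assert (0 <= rad ^ j) by (apply pow_le; lra).
  pose proof (Cmod_ge_0 w). pose proof (Rabs_pos v). pose proof (Rabs_pos mu).
  assert (Hpoly : INR j ^ 3 + Rabs mu * INR j ^ 2 + Rabs v * INR j
                  <= (1 + Rabs mu + Rabs v) * (1 + INR j) ^ 3).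
  { pose proof (pow_le_succ_cube _ 1 Hj0 ltac:(lia)). pose proof (pow_le_succ_cube _ 2 Hj0 ltac:(lia)).
    pose proof (pow_le_succ_cube _ 3 Hj0 ltac:(lia)). nra. }
  eapply Rle_trans; [apply Rmult_le_compat_l; [lra|exact Ht]|].
  replace (p j * ((INR j + Rabs mu) * (INR j ^ 2 * Cmod w ^ 2 * rad ^ j)
                  + Rabs v * Cmod w * (INR j * Cmod w * rad ^ j)))
    with (p j * Cmod w ^ 2 * rad ^ j * (INR j ^ 3 + Rabs mu * INR j ^ 2 + Rabs v * INR j))
    by ring.
  replace ((1 + Rabs mu + Rabs v) * Cmod w ^ 2 * (p j * (1 + INR j) ^ 3 * rad ^ j))
    with (p j * Cmod w ^ 2 * rad ^ j * ((1 + Rabs mu + Rabs v) * (1 + INR j) ^ 3)) by ring.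
  apply Rmult_le_compat_l; [|exact Hpoly].
  apply Rmult_le_pos; [apply Rmult_le_pos|]; nra.
Qed.

Hypothesis p_sum1 : is_series p 1.

Lemma pgf_1 : pgf p 1 = 1.
Proof.
  rewrite pgf_csum, (csum_ext _ (fun j => RtoC (p j))), csum_RtoC.
  - now rewrite (is_series_unique _ _ p_sum1).
  - intros j. rewrite cpow_1. ring.
Qed.

Lemma pgf_mean_centered : Series (fun j => p j * (INR j - pgf_mean p)) = 0.
Proof.
  pose proof (ex_series_moment 1 ltac:(lia)) as Hm1.
  rewrite (Series_ext _ (fun j => 1 * (INR j ^ 1 * p j) + (- pgf_mean p) * p j)) by (intros; ring).
  rewrite Series_lin, (is_series_unique _ _ p_sum1) by (auto; now exists 1).
  unfold pgf_mean. rewrite (Series_ext _ (fun j => INR j * p j)) by (intros; ring). ring.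
Qed.

Lemma pgf_var_centered :
  Series (fun j => p j * (INR j ^ 2 - pgf_mean p * INR j - pgf_var p)) = 0.
Proof.
  pose proof (ex_series_moment 1 ltac:(lia)) as Hm1.
  pose proof (ex_series_moment 2 ltac:(lia)) as Hm2.
  assert (Hp : ex_series p) by now exists 1.
  rewrite (Series_ext _ (fun j => 1 * (1 * (INR j ^ 2 * p j) + (- pgf_mean p) * (INR j ^ 1 * p j))
                                  + (- pgf_var p) * p j)) by (intros; ring).
  rewrite !Series_lin, (is_series_unique _ _ p_sum1) by auto using ex_series_lin.
  unfold pgf_var, pgf_d2, pgf_mean.
  rewrite (Series_ext (fun j => INR j * (INR j - 1) * p j)
                      (fun j => 1 * (INR j ^ 2 * p j) + (- 1) * (INR j ^ 1 * p j))) by (intros; ring).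
  rewrite (Series_ext (fun j => INR j * p j) (fun j => INR j ^ 1 * p j)) by (intros; ring).
  rewrite Series_lin by auto. ring.
Qed.

(* X'(1) = mu and X''(1) + X'(1) - X'(1)^2 = v make the first two Taylor terms of
   [z X'(z) - (mu + v (z - 1)) X(z)] at [z = 1] vanish. *)
Lemma pgf_logderiv (w : C) : Cmod (1 + w) <= rad ->
  Cmod ((1 + w) * pgf_deriv p (1 + w) - (pgf_mean p + pgf_var p * w) * pgf p (1 + w))
    <= (1 + Rabs (pgf_mean p) + Rabs (pgf_var p)) * Series (pgf_weight p rad) * Cmod w ^ 2.
Proof.
  intros HZ. set (Z := (1 + w)%C) in *. set (mu := pgf_mean p). set (v := pgf_var p).
  set (main := fun j => (p j * ((INR j - mu) * (cpow Z j - 1 - INR j * w) - v * w * (cpow Z j - 1)))%C).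
  set (c1 := fun j => RtoC (p j * (INR j - mu))).
  set (c2 := fun j => RtoC (p j * (INR j ^ 2 - mu * INR j - v))).
  pose proof (fun j => Cmod_logderiv_term_le mu v w j HZ) as Hmain.
  assert (A1 : abs_summable c1).
  { apply (abs_summable_dominated _ (Rabs 0 + Rabs 1 + Rabs (- mu))). intros j. unfold c1.
    rewrite Cmod_R. replace (INR j - mu) with (0 * INR j ^ 2 + 1 * INR j + - mu) by ring.
    apply Rabs_quadratic_term_le. }
  assert (A2 : abs_summable c2).
  { apply (abs_summable_dominated _ (Rabs 1 + Rabs (- mu) + Rabs (- v))). intros j. unfold c2.
    rewrite Cmod_R. replace (INR j ^ 2 - mu * INR j - v) with (1 * INR j ^ 2 + - mu * INR j + - v)
      by ring.
    apply Rabs_quadratic_term_le. }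
  assert (AX : abs_summable (fun j => p j * cpow Z j)%C).
  { apply (abs_summable_dominated _ 1). intros j. rewrite Rmult_1_l. now apply Cmod_pgf_term_le. }
  assert (AY : abs_summable (fun j => p j * (INR j * cpow Z j))%C).
  { apply (abs_summable_dominated _ 1). intros j. rewrite Rmult_1_l. now apply Cmod_pgf_deriv_term_le. }
  pose proof (abs_summable_dominated _ _ Hmain) as Amain.
  rewrite Cmult_pgf_deriv, pgf_csum by exact HZ.
  replace (csum (fun j => p j * (INR j * cpow Z j)) - (mu + v * w) * csum (fun j => p j * cpow Z j))%C
    with (1 * csum (fun j => p j * (INR j * cpow Z j)) + (- (mu + v * w)) * csum (fun j => p j * cpow Z j))%C
    by ring.
  rewrite <- csum_lin by auto.
  rewrite (csum_ext _ (fun j => 1 * main j + 1 * (1 * c1 j + w * c2 j))%C).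
  2:{ intros j. unfold main, c1, c2. rewrite !RtoC_mult, !RtoC_minus, RtoC_mult, RtoC_pow. ring. }
  rewrite !csum_lin by auto using abs_summable_lin.
  unfold c1, c2. rewrite !csum_RtoC. unfold mu, v. rewrite pgf_mean_centered, pgf_var_centered. fold mu v.
  replace (1 * csum main + 1 * (1 * 0 + w * 0))%C with (csum main) by ring.
  replace ((1 + Rabs mu + Rabs v) * Series (pgf_weight p rad) * Cmod w ^ 2)
    with ((1 + Rabs mu + Rabs v) * Cmod w ^ 2 * Series (pgf_weight p rad)) by ring.
  now apply Cmod_csum_dominated.
Qed.

Lemma pgf_near_one_radius_pos : 1 < rad -> 0 < pgf_near_one_radius p rad.
Proof.
  intros Hrad. pose proof pgf_weight_Series_nonneg.
  apply Rmin_pos; apply Rdiv_lt_0_compat; lra.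
Qed.

Lemma pgf_near_one (Z : C) : 1 < rad -> Cmod (Z - 1) <= pgf_near_one_radius p rad ->
  Cmod Z < rad /\ pgf p Z <> 0 /\
  Cmod (Z * pgf_deriv p Z / pgf p Z - pgf_mean p - pgf_var p * (Z - 1))
    <= 2 * (1 + Rabs (pgf_mean p) + Rabs (pgf_var p)) * Series (pgf_weight p rad) * Cmod (Z - 1) ^ 2.
Proof.
  intros Hrad Hnear. pose proof pgf_weight_Series_nonneg as HW.
  set (W := Series (pgf_weight p rad)) in *.
  assert (Hnear1 : Cmod (Z - 1) <= (rad - 1) / 2) by (eapply Rle_trans; [exact Hnear|apply Rmin_l]).
  assert (Hnear2 : Cmod (Z - 1) <= 1 / (2 * W + 2)) by (eapply Rle_trans; [exact Hnear|apply Rmin_r]).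
  assert (HZ : Cmod Z < rad).
  { replace Z with (1 + (Z - 1))%C by ring. eapply Rle_lt_trans; [apply Cmod_triangle|].
    rewrite Cmod_1. lra. }
  assert (HX : Cmod (pgf p Z - 1) <= 1 / 2).
  { rewrite <- pgf_1. eapply Rle_trans; [apply pgf_lipschitz; [rewrite Cmod_1|]; lra|].
    fold W. apply Rle_trans with (W * (1 / (2 * W + 2))); [apply Rmult_le_compat_l; lra|].
    apply (Rmult_le_reg_r (2 * W + 2)); [lra|]. field_simplify; lra. }
  assert (HXlow : 1 / 2 <= Cmod (pgf p Z)).
  { assert (Htri : Cmod (RtoC 1) <= Cmod (pgf p Z) + Cmod (1 - pgf p Z))
      by (replace (RtoC 1) with (pgf p Z + (1 - pgf p Z))%C at 1 by ring; apply Cmod_triangle).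
    rewrite Cmod_1 in Htri. replace (1 - pgf p Z)%C with (- (pgf p Z - 1))%C in Htri by ring.
    rewrite Cmod_opp in Htri. lra. }
  assert (HX0 : pgf p Z <> 0) by (apply Cmod_gt_0; lra).
  split; [exact HZ|split; [exact HX0|]].
  pose proof (pgf_logderiv (Z - 1)) as Hlog. replace (1 + (Z - 1))%C with Z in Hlog by ring.
  specialize (Hlog ltac:(lra)). fold W in Hlog.
  replace (Z * pgf_deriv p Z / pgf p Z - pgf_mean p - pgf_var p * (Z - 1))%C
    with ((Z * pgf_deriv p Z - (pgf_mean p + pgf_var p * (Z - 1)) * pgf p Z) / pgf p Z)%C
    by (field; exact HX0).
  rewrite Cmod_div by exact HX0.
  apply (Rmult_le_reg_r (Cmod (pgf p Z))); [lra|].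
  unfold Rdiv. rewrite Rmult_assoc, Rinv_l, Rmult_1_r by lra.
  pose proof (Rabs_pos (pgf_mean p)). pose proof (Rabs_pos (pgf_var p)).
  pose proof (pow2_ge_0 (Cmod (Z - 1))).
  assert (0 <= (1 + Rabs (pgf_mean p) + Rabs (pgf_var p)) * W * Cmod (Z - 1) ^ 2)
    by (apply Rmult_le_pos; [apply Rmult_le_pos|]; lra).
  nra.
Qed.

End PgfOnDisc.

(** * A disc of convergence beyond 1 *)

Lemma succ_le_geometric (e : R) (j : nat) : 0 < e -> 1 + INR j <= (1 + / e) * (1 + e) ^ j.
Proof.
  intros He. pose proof (Rle_pow_lin e j (Rlt_le _ _ He)) as Hb.
  assert (1 <= (1 + e) ^ j) by (apply pow_R1_Rle; lra).
  assert (INR j <= (1 + e) ^ j / e) by (apply (Rmult_le_reg_r e); [lra|]; field_simplify; lra).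
  unfold Rdiv in *. nra.
Qed.

Lemma exists_summable_pgf_weight (p : nat -> R) : (forall j, 0 <= p j) ->
  Rbar_lt 1 (CV_radius p) -> exists rad, 1 < rad /\ ex_series (pgf_weight p rad).
Proof.
  intros Hp Hr.
  assert (HR2 : exists R2, 1 < R2 /\ Rbar_lt R2 (CV_radius p)).
  { destruct (CV_radius p) as [r| |]; simpl in Hr; try contradiction.
    - exists ((1 + r) / 2). split; simpl; lra.
    - exists 2. split; simpl; auto; lra. }
  destruct HR2 as [R2 [HR2 HR2r]].
  assert (Hcv : ex_series (fun j => Rabs (p j * R2 ^ j)))
    by (apply CV_disk_inside; rewrite Rabs_right by lra; auto).
  (* with (1 + e)^4 <= R2, Bernoulli gives (1 + j)^3 (1 + e)^j <= (1 + 1/e)^3 R2^j *)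
  set (e := Rmin 1 ((R2 - 1) / 15)).
  assert (He : 0 < e) by (apply Rmin_pos; lra).
  assert (He1 : e <= 1) by apply Rmin_l.
  assert (He2 : e <= (R2 - 1) / 15) by apply Rmin_r.
  exists (1 + e). split; [lra|].
  eapply ex_series_Rle; [|exact (ex_series_scal_l ((1 + / e) ^ 3) _ Hcv)].
  intros j. cbv beta. unfold pgf_weight. specialize (Hp j). pose proof (pos_INR j).
  set (q := (1 + e) ^ j).
  assert (Hq1 : 1 <= q) by (apply pow_R1_Rle; lra).
  assert (Hq4 : q ^ 4 <= R2 ^ j).
  { unfold q. rewrite <- pow_mult, Nat.mul_comm, pow_mult. apply pow_incr.
    split; [apply pow_le; lra|].
    replace ((1 + e) ^ 4) with (1 + 4 * e + 6 * e ^ 2 + 4 * e ^ 3 + e ^ 4) by ring.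
    assert (e ^ 2 <= e) by nra. assert (e ^ 3 <= e) by nra. assert (e ^ 4 <= e) by nra. lra. }
  pose proof (succ_le_geometric e j He) as Hj. fold q in Hj.
  assert (Hj3 : (1 + INR j) ^ 3 <= (1 + / e) ^ 3 * q ^ 3)
    by (rewrite <- Rpow_mult_distr; apply pow_incr; lra).
  assert (HR2j : 0 <= R2 ^ j) by (apply pow_le; lra).
  rewrite Rabs_right, (Rabs_right (p j * R2 ^ j)) by
    (apply Rle_ge; repeat apply Rmult_le_pos; try apply pow_le; lra).
  assert (0 <= (1 + / e) ^ 3) by (apply pow_le; pose proof (Rinv_0_lt_compat e He); lra).
  apply Rle_trans with (p j * ((1 + / e) ^ 3 * q ^ 4)).
  - rewrite Rmult_assoc. apply Rmult_le_compat_l; auto.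
    replace ((1 + / e) ^ 3 * q ^ 4) with ((1 + / e) ^ 3 * q ^ 3 * q) by ring.
    apply Rmult_le_compat_r; lra.
  - change (scal ((1 + / e) ^ 3) (p j * R2 ^ j)) with ((1 + / e) ^ 3 * (p j * R2 ^ j)).
    replace ((1 + / e) ^ 3 * (p j * R2 ^ j)) with (p j * ((1 + / e) ^ 3 * R2 ^ j)) by ring.
    apply Rmult_le_compat_l; auto. apply Rmult_le_compat_l; auto.
Qed.

(** * The square root of b^2 - 2 pi i x *)

Lemma Cmod_csqrt_sqr (w : C) : Cmod (csqrt w) ^ 2 = Cmod w.
Proof.
  rewrite Cmod2_alt. unfold csqrt, Re, Im; simpl fst; simpl snd.
  pose proof (re_le_Cmod w) as Hre. unfold Re in Hre.
  assert (A1 : 0 <= (Cmod w + fst w) / 2) by (pose proof (Rabs_maj2 (fst w)); lra).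
  assert (A2 : 0 <= (Cmod w - fst w) / 2) by (pose proof (Rle_abs (fst w)); lra).
  destruct (Rle_dec 0 (snd w)).
  - rewrite !pow2_sqrt by auto. field.
  - replace ((- sqrt ((Cmod w - fst w) / 2)) ^ 2) with (sqrt ((Cmod w - fst w) / 2) ^ 2) by ring.
    rewrite !pow2_sqrt by auto. field.
Qed.

Lemma Rle_of_sqr_le (a b : R) : 0 <= b -> a ^ 2 <= b ^ 2 -> a <= b.
Proof. intros Hb H. destruct (Rle_or_lt a b) as [|Hl]; auto. nra. Qed.

Lemma Cmod_pair_bounds (x y : R) :
  Rabs x <= Cmod (x, y) /\ Rabs y <= Cmod (x, y) /\ Cmod (x, y) <= Rabs x + Rabs y.
Proof.
  pose proof (Cmod2_alt (x, y)) as Hsq. unfold Re, Im in Hsq; simpl in Hsq.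
  pose proof (Cmod_ge_0 (x, y)). pose proof (Rabs_pos x). pose proof (Rabs_pos y).
  pose proof (pow2_abs x). pose proof (pow2_abs y).
  split; [|split]; apply Rle_of_sqr_le; auto; nra.
Qed.

Lemma Cmod_csqrt_shift_sqr_bounds (b x : R) :
  Rmin (b ^ 2) (2 * PI) / 2 * (1 + Rabs x)
    <= Cmod (csqrt (Cminus (RtoC (b ^ 2)) (Cmult (RtoC (2 * PI * x)) Ci))) ^ 2
    <= (b ^ 2 + 2 * PI) * (1 + Rabs x).
Proof.
  rewrite Cmod_csqrt_sqr.
  replace (Cminus (RtoC (b ^ 2)) (Cmult (RtoC (2 * PI * x)) Ci)) with (b ^ 2, - (2 * PI * x))
    by (apply injective_projections; unfold Cminus, Cplus, Copp, Cmult, Ci, RtoC; simpl; ring).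
  destruct (Cmod_pair_bounds (b ^ 2) (- (2 * PI * x))) as [Hre [Him Hsum]].
  pose proof PI_RGT_0. pose proof (Rabs_pos x).
  rewrite Rabs_right in Hre, Hsum by (apply Rle_ge, pow2_ge_0).
  rewrite Rabs_Ropp, Rabs_mult, (Rabs_right (2 * PI)) in Him, Hsum by lra.
  pose proof (Rmin_l (b ^ 2) (2 * PI)). pose proof (Rmin_r (b ^ 2) (2 * PI)).
  pose proof (pow2_ge_0 b). split; nra.
Qed.

Lemma csqrt_shift_neq0 (b x : R) : b <> 0 ->
  csqrt (Cminus (RtoC (b ^ 2)) (Cmult (RtoC (2 * PI * x)) Ci)) <> 0.
Proof.
  intros Hb. apply Cmod_gt_0. destruct (Cmod_csqrt_shift_sqr_bounds b x) as [Hlow _].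
  pose proof PI_RGT_0. pose proof (Rabs_pos x).
  assert (0 < b ^ 2) by (simpl; rewrite Rmult_1_r; now apply Rsqr_pos_lt).
  assert (0 < Rmin (b ^ 2) (2 * PI)) by (apply Rmin_pos; lra).
  pose proof (Cmod_ge_0 (csqrt (Cminus (RtoC (b ^ 2)) (Cmult (RtoC (2 * PI * x)) Ci)))).
  nra.
Qed.

(** * Asymptotics of the zeros *)

Lemma sqrt_ratio_ge_inv_sqrt (S y : R) : 0 < S -> 1 <= y -> / sqrt S <= sqrt (y / S).
Proof.
  intros HS Hy. rewrite <- sqrt_inv. apply sqrt_le_1_alt.
  unfold Rdiv. rewrite <- (Rmult_1_l (/ S)) at 1.
  apply Rmult_le_compat_r; [apply Rlt_le, Rinv_0_lt_compat|]; lra.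
Qed.

Lemma sqrt_mult_sqrt_ratio (S y : R) : 0 < S -> 0 <= y -> sqrt S * sqrt (y / S) = sqrt y.
Proof.
  intros HS Hy. rewrite <- sqrt_mult_alt by lra. f_equal. field. lra.
Qed.

Lemma le_sqrt_of_le_1 (t : R) : 0 <= t <= 1 -> t <= sqrt t.
Proof.
  intros Ht. pose proof (sqrt_pos t). pose proof (sqrt_sqrt t ltac:(lra)).
  assert (sqrt t <= 1) by (rewrite <- sqrt_1; apply sqrt_le_1_alt; lra). nra.
Qed.

Lemma sqrt_le_self (y : R) : 1 <= y -> sqrt y <= y.
Proof.
  intros Hy. pose proof (sqrt_pos y). pose proof (sqrt_sqrt y ltac:(lra)).
  assert (1 <= sqrt y) by (rewrite <- sqrt_1; apply sqrt_le_1_alt; lra). nra.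
Qed.

Lemma sqrt_ratio_le (S y : R) : 0 < S -> 1 <= y -> sqrt (y / S) <= y / sqrt S.
Proof.
  intros HS Hy. assert (Hr : 0 < sqrt S) by (apply sqrt_lt_R0; lra).
  apply (Rmult_le_reg_l (sqrt S)); [exact Hr|].
  rewrite sqrt_mult_sqrt_ratio by lra.
  replace (sqrt S * (y / sqrt S)) with y by (field; lra).
  now apply sqrt_le_self.
Qed.

Lemma Cmod_div_sub_le (G Dl : C) : 0 < Cmod G -> 2 * Cmod Dl <= Cmod G ->
  (G - Dl)%C <> 0 /\ Cmod (Dl / (G - Dl)) <= 2 * Cmod Dl / Cmod G.
Proof.
  intros HG HDl.
  assert (Hlow : Cmod G / 2 <= Cmod (G - Dl)).
  { assert (Cmod G <= Cmod (G - Dl) + Cmod Dl)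
      by (replace G with ((G - Dl) + Dl)%C at 1 by ring; apply Cmod_triangle). lra. }
  assert (Hne : (G - Dl)%C <> 0) by (apply Cmod_gt_0; lra).
  split; auto. rewrite Cmod_div by auto.
  apply (Rmult_le_reg_r (Cmod (G - Dl))); [lra|].
  unfold Rdiv. rewrite Rmult_assoc, Rinv_l, Rmult_1_r by lra.
  pose proof (Cmod_ge_0 Dl).
  apply Rle_trans with (2 * Cmod Dl * / Cmod G * (Cmod G / 2)).
  - right. field. lra.
  - apply Rmult_le_compat_l; [|lra]. apply Rmult_le_pos; [lra|apply Rlt_le, Rinv_0_lt_compat; lra].
Qed.

Lemma Cmod_relative_error_le (G Dl : C) (B c u y : R) :
  0 < c -> 0 < y -> 0 < u -> u * (2 * B) <= c -> Cmod Dl <= B * y -> c * y <= u * Cmod G ->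
  (G - Dl)%C <> 0 /\ Cmod (Dl / (G - Dl)) <= 2 * B / c * u.
Proof.
  intros Hc Hy Hu HuB HDl HG. pose proof (Cmod_ge_0 Dl). pose proof (Cmod_ge_0 G).
  assert (HGpos : 0 < Cmod G) by nra.
  assert (H2Dl : 2 * Cmod Dl <= Cmod G) by nra.
  destruct (Cmod_div_sub_le G Dl HGpos H2Dl) as [Hne Hbound]. split; [exact Hne|].
  eapply Rle_trans; [exact Hbound|].
  apply (Rmult_le_reg_r (Cmod G * c)); [nra|].
  replace (2 * Cmod Dl / Cmod G * (Cmod G * c)) with (2 * Cmod Dl * c) by (field; lra).
  replace (2 * B / c * u * (Cmod G * c)) with (2 * B * (u * Cmod G)) by (field; lra).
  assert (HB : 0 <= B) by nra.
  assert (Cmod Dl * c <= B * y * c) by (apply Rmult_le_compat_r; lra).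
  assert (B * (c * y) <= B * (u * Cmod G)) by (apply Rmult_le_compat_l; lra).
  lra.
Qed.

Lemma zero_defect_identity (g r N v a b mu sq w L : C) :
  r <> 0 -> b <> 0 -> mu <> 0 -> v <> 0 ->
  N = ((r * r - g * r) / mu)%C -> a = (g * mu / (b * v))%C ->
  ((r * r - N * mu) * sq / b - (N * L - r * r)
   = g * g * (1 + sq / b) - N * v * (w - a / r * (b + sq)) - N * (L - mu - v * w))%C.
Proof. intros; subst. field. repeat split; auto. Qed.

Section ZeroAsymptotics.
Variables (mu var cg Cg CZ KL ew : R).
Hypotheses (mu_pos : 0 < mu) (var_pos : 0 < var) (cg_pos : 0 < cg) (cg_le_Cg : cg <= Cg)
  (KL_nonneg : 0 <= KL) (ew_pos : 0 < ew).

Let sigma := sqrt var.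

(* All estimates are in terms of u = sqrt((1 + |k|) / s): |Z - 1| <= Kw u, the remainder of
   n L - s is at most B4 (1 + |k|), and the main term is at least cG (1 + |k|) / u. *)
Let a0 := sqrt (2 * mu) / sigma.
Let b_of (g : R) := g * sqrt mu / (sigma * sqrt 2).
Let bl := b_of cg.
Let bh := b_of Cg.
Let B1 := bh ^ 2 + 2 * PI.
Let B2 := Rmin (bl ^ 2) (2 * PI) / 2.
Let Kw := a0 * (bh + sqrt B1) + Rabs CZ.
Let B4 := Cg ^ 2 * (1 + sqrt B1 / bl) + var * Rabs CZ / mu + KL * Kw ^ 2 / mu.
Let cG := cg / bh * sqrt B2.

Lemma sigma_pos : 0 < sigma.
Proof. now apply sqrt_lt_R0. Qed.

Lemma b_of_bounds (g : R) : cg <= g <= Cg -> 0 < bl /\ bl <= b_of g <= bh.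
Proof.
  intros Hg. pose proof (sqrt_lt_R0 mu mu_pos). pose proof (sqrt_lt_R0 2 ltac:(lra)).
  pose proof sigma_pos.
  assert (Hd : 0 < / (sigma * sqrt 2)) by (apply Rinv_0_lt_compat, Rmult_lt_0_compat; lra).
  unfold bl, bh, b_of, Rdiv. repeat split; apply Rmult_le_compat_r || apply Rmult_lt_0_compat;
    try apply Rmult_le_compat_r; try apply Rmult_lt_0_compat; lra.
Qed.

Lemma a0_mul_b_of (g : R) : a0 * b_of g * var = g * mu.
Proof.
  unfold a0, b_of. rewrite sqrt_mult by lra.
  pose proof (sqrt_lt_R0 2 ltac:(lra)). pose proof sigma_pos.
  rewrite <- (pow2_sqrt var) by lra. fold sigma.
  replace (sqrt 2 * sqrt mu / sigma * (g * sqrt mu / (sigma * sqrt 2)) * sigma ^ 2)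
    with (g * (sqrt mu * sqrt mu)) by (field; lra).
  now rewrite sqrt_sqrt by lra.
Qed.

Lemma zero_asymptotics_constants_pos : 0 < bl /\ 0 < bh /\ 0 < B2 /\ 0 < Kw /\ 0 < B4 /\ 0 < cG.
Proof.
  destruct (b_of_bounds cg ltac:(lra)) as [Hbl [_ Hbh]]. fold bl in Hbh.
  pose proof sigma_pos.
  assert (Ha0 : 0 < a0) by (apply Rdiv_lt_0_compat; [apply sqrt_lt_R0|]; lra).
  assert (HB2 : 0 < B2).
  { unfold B2. pose proof PI_RGT_0. apply Rdiv_lt_0_compat; [apply Rmin_pos|]; nra. }
  assert (HKw : 0 < Kw) by (unfold Kw; pose proof (sqrt_pos B1); pose proof (Rabs_pos CZ); nra).
  pose proof (sqrt_pos B1). pose proof (Rabs_pos CZ).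
  repeat split; try lra.
  - unfold B4. assert (0 < 1 + sqrt B1 / bl) by (pose proof (Rdiv_le_0_compat _ _ (sqrt_pos B1) Hbl); lra).
    assert (0 <= var * Rabs CZ / mu) by (apply Rdiv_le_0_compat; nra).
    assert (0 <= KL * Kw ^ 2 / mu) by (apply Rdiv_le_0_compat; nra).
    assert (0 < Cg ^ 2) by nra. nra.
  - unfold cG. apply Rmult_lt_0_compat; [apply Rdiv_lt_0_compat; lra|apply sqrt_lt_R0; lra].
Qed.

Lemma zero_deviation_bound (S x b0 : R) (sq Z : C) :
  0 < S -> (1 + Rabs x) / S <= 1 -> 0 <= b0 <= bh -> Cmod sq ^ 2 <= B1 * (1 + Rabs x) ->
  Cmod (Z - (1 + RtoC (a0 / sqrt S) * (b0 + sq))) <= CZ * (1 + Rabs x) / S ->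
  Cmod (Z - 1) <= Kw * sqrt ((1 + Rabs x) / S).
Proof.
  intros HS Ht Hb0 Hsq Hzeta.
  set (t := (1 + Rabs x) / S) in *. set (u := sqrt t).
  pose proof (Rabs_pos x). pose proof (sqrt_lt_R0 S HS) as Hr.
  assert (Ht0 : 0 <= t) by (unfold t; apply Rdiv_le_0_compat; lra).
  assert (Hinv : / sqrt S <= u) by (apply sqrt_ratio_ge_inv_sqrt; lra).
  assert (Htu : t <= u) by (apply le_sqrt_of_le_1; lra).
  assert (Hsqu : Cmod sq / sqrt S <= sqrt B1 * u).
  { unfold u. rewrite <- sqrt_mult_alt by (unfold B1; pose proof PI_RGT_0; nra).
    rewrite <- (sqrt_pow2 (Cmod sq)), <- sqrt_div_alt by (apply Cmod_ge_0 || lra).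
    apply sqrt_le_1_alt. unfold t. unfold Rdiv. rewrite <- Rmult_assoc.
    apply Rmult_le_compat_r; [apply Rlt_le, Rinv_0_lt_compat|]; lra. }
  pose proof sigma_pos.
  assert (Ha0 : 0 <= a0) by (apply Rdiv_le_0_compat; [apply sqrt_pos|lra]).
  replace (Z - 1)%C with (RtoC (a0 / sqrt S) * (b0 + sq) + (Z - (1 + RtoC (a0 / sqrt S) * (b0 + sq))))%C
    by ring.
  eapply Rle_trans; [apply Cmod_triangle|].
  rewrite Cmod_mult, Cmod_R, Rabs_right
    by (lra || apply Rle_ge, Rdiv_le_0_compat; lra).
  assert (Hbsq : Cmod (b0 + sq) <= b0 + Cmod sq)
    by (eapply Rle_trans; [apply Cmod_triangle|]; rewrite Cmod_R, Rabs_right; lra).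
  assert (Hfirst : a0 / sqrt S * Cmod (b0 + sq) <= a0 * (bh * u + sqrt B1 * u)).
  { apply Rle_trans with (a0 * (b0 * / sqrt S + Cmod sq / sqrt S)).
    - unfold Rdiv. rewrite Rmult_assoc. apply Rmult_le_compat_l; auto.
      pose proof (Rinv_0_lt_compat _ Hr). nra.
    - apply Rmult_le_compat_l; auto. apply Rplus_le_compat; auto.
      apply Rmult_le_compat; try lra. apply Rlt_le, Rinv_0_lt_compat; lra. }
  assert (Hsecond : CZ * (1 + Rabs x) / S <= Rabs CZ * u).
  { replace (CZ * (1 + Rabs x) / S) with (CZ * t) by (unfold t; field; lra).
    apply Rle_trans with (Rabs CZ * t); [apply Rmult_le_compat_r; [lra|apply Rle_abs]|].
    apply Rmult_le_compat_l; [apply Rabs_pos|lra]. }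
  unfold Kw. nra.
Qed.

Lemma zero_defect_decomposition (S N gamma : R) (sq Z L : C) :
  0 < S -> sqrt S * gamma = S - N * mu -> cg <= gamma <= Cg ->
  ((S - N * mu) * sq / b_of gamma - (N * L - S)
   = gamma * gamma * (1 + sq / b_of gamma) - N * var * (Z - (1 + RtoC (a0 / sqrt S) * (b_of gamma + sq)))
     - N * (L - mu - var * (Z - 1)))%C.
Proof.
  intros HS Hgamma Hg. destruct (b_of_bounds gamma Hg) as [Hbl [Hb0l _]].
  set (b0 := b_of gamma) in *. set (r := sqrt S) in *.
  assert (Hr : 0 < r) by (apply sqrt_lt_R0; lra).
  assert (Hrr : r * r = S) by (apply sqrt_sqrt; lra).
  replace (RtoC S) with (RtoC r * RtoC r)%C by (rewrite <- RtoC_mult; congruence).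
  rewrite RtoC_div by lra.
  replace (Z - (1 + a0 / r * (b0 + sq)))%C with ((Z - 1) - a0 / r * (b0 + sq))%C by ring.
  apply zero_defect_identity; try (intros HH; apply RtoC_inj in HH; lra).
  - rewrite <- !RtoC_mult, <- RtoC_minus, <- RtoC_div by lra. f_equal.
    apply (Rmult_eq_reg_r mu); [|lra]. rewrite Hrr. field_simplify; lra.
  - rewrite <- !RtoC_mult, <- RtoC_div by (apply Rmult_integral_contrapositive; split; lra).
    f_equal. rewrite <- (a0_mul_b_of gamma). fold b0. field. split; lra.
Qed.

Lemma Cmod_defect_main_le (gamma x : R) (sq : C) :
  cg <= gamma <= Cg -> Cmod sq ^ 2 <= B1 * (1 + Rabs x) ->
  Cmod (gamma * gamma * (1 + sq / b_of gamma)) <= Cg ^ 2 * (1 + sqrt B1 / bl) * (1 + Rabs x).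
Proof.
  intros Hg Hsq. destruct (b_of_bounds gamma Hg) as [Hbl [Hb0l Hb0h]].
  pose proof (Rabs_pos x). pose proof PI_RGT_0.
  assert (Hsq1 : Cmod sq <= sqrt B1 * (1 + Rabs x)).
  { apply Rle_trans with (sqrt (B1 * (1 + Rabs x))).
    - rewrite <- (sqrt_pow2 (Cmod sq)) by apply Cmod_ge_0. now apply sqrt_le_1_alt.
    - rewrite sqrt_mult_alt by (unfold B1; nra). apply Rmult_le_compat_l; [apply sqrt_pos|].
      apply sqrt_le_self. lra. }
  rewrite !Cmod_mult, Cmod_R, Rabs_right by lra.
  assert (Cmod (1 + sq / b_of gamma) <= 1 + sqrt B1 / bl * (1 + Rabs x)).
  { eapply Rle_trans; [apply Cmod_triangle|]. rewrite Cmod_1, Cmod_div, Cmod_R, Rabs_right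
      by (lra || (intros HH; apply RtoC_inj in HH; lra)).
    apply Rplus_le_compat_l. unfold Rdiv.
    rewrite (Rmult_comm (sqrt B1)), Rmult_assoc, (Rmult_comm (/ bl)).
    apply Rmult_le_compat; try lra; [apply Cmod_ge_0|apply Rlt_le, Rinv_0_lt_compat; lra|].
    apply Rinv_le_contravar; lra. }
  assert (gamma * gamma <= Cg ^ 2) by nra.
  assert (0 <= sqrt B1 / bl) by (apply Rdiv_le_0_compat; [apply sqrt_pos|lra]).
  apply Rle_trans with (Cg ^ 2 * (1 + sqrt B1 / bl * (1 + Rabs x))).
  - apply Rmult_le_compat; try nra; apply Cmod_ge_0.
  - rewrite Rmult_assoc. apply Rmult_le_compat_l; nra.
Qed.

Lemma zero_defect_bound (S N gamma x : R) (sq Z L : C) :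
  0 < S -> 0 < N -> (1 + Rabs x) / S <= 1 -> sqrt S * gamma = S - N * mu -> cg <= gamma <= Cg ->
  Cmod sq ^ 2 <= B1 * (1 + Rabs x) ->
  Cmod (Z - (1 + RtoC (a0 / sqrt S) * (b_of gamma + sq))) <= CZ * (1 + Rabs x) / S ->
  Cmod (L - mu - var * (Z - 1)) <= KL * Cmod (Z - 1) ^ 2 ->
  Cmod ((S - N * mu) * sq / b_of gamma - (N * L - S)) <= B4 * (1 + Rabs x).
Proof.
  intros HS HN Ht Hgamma Hg Hsq Hzeta HL.
  destruct (b_of_bounds gamma Hg) as [Hbl [Hb0l Hb0h]].
  pose proof (Rabs_pos x).
  pose proof (zero_deviation_bound S x (b_of gamma) sq Z HS Ht ltac:(lra) Hsq Hzeta) as Hw.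
  pose proof (Cmod_defect_main_le gamma x sq Hg Hsq) as T1.
  rewrite (zero_defect_decomposition S N gamma sq Z L HS Hgamma Hg).
  set (zeta := (Z - (1 + RtoC (a0 / sqrt S) * (b_of gamma + sq)))%C) in *.
  set (w := (Z - 1)%C) in *. set (u := sqrt ((1 + Rabs x) / S)) in *.
  assert (Hu2 : S * u ^ 2 = 1 + Rabs x)
    by (unfold u; rewrite pow2_sqrt; [field; lra|apply Rdiv_le_0_compat; lra]).
  assert (HNS : N <= S / mu).
  { assert (0 < sqrt S * gamma) by (apply Rmult_lt_0_compat; [apply sqrt_lt_R0|]; lra).
    apply (Rmult_le_reg_r mu); [lra|]. unfold Rdiv. rewrite Rmult_assoc, Rinv_l, Rmult_1_r by lra. lra. }
  assert (T2 : Cmod (N * var * zeta) <= var * Rabs CZ / mu * (1 + Rabs x)).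
  { rewrite !Cmod_mult, !Cmod_R, !Rabs_right by lra.
    apply Rle_trans with (S / mu * var * (Rabs CZ * (1 + Rabs x) / S)).
    - apply Rmult_le_compat; try nra; [apply Cmod_ge_0|].
      eapply Rle_trans; [exact Hzeta|]. unfold Rdiv.
      apply Rmult_le_compat_r; [apply Rlt_le, Rinv_0_lt_compat; lra|].
      apply Rmult_le_compat_r; [lra|apply Rle_abs].
    - right. field. lra. }
  assert (T3 : Cmod (N * (L - mu - var * w)) <= KL * Kw ^ 2 / mu * (1 + Rabs x)).
  { rewrite Cmod_mult, Cmod_R, Rabs_right by lra.
    assert (Cmod w ^ 2 <= (Kw * u) ^ 2) by (apply pow_incr; split; [apply Cmod_ge_0|exact Hw]).
    apply Rle_trans with (S / mu * (KL * (Kw * u) ^ 2)).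
    - apply Rmult_le_compat; try lra; [apply Cmod_ge_0|].
      eapply Rle_trans; [exact HL|]. apply Rmult_le_compat_l; lra.
    - rewrite <- Hu2. right. field. lra. }
  unfold Cminus at 1 2. eapply Rle_trans; [apply Cmod_triangle|]. rewrite Cmod_opp.
  eapply Rle_trans; [apply Rplus_le_compat_r, Cmod_triangle|]. rewrite Cmod_opp.
  unfold B4. lra.
Qed.

Lemma main_term_lower_bound (S N gamma x : R) (sq : C) :
  0 < S -> sqrt S * gamma = S - N * mu -> cg <= gamma <= Cg -> B2 * (1 + Rabs x) <= Cmod sq ^ 2 ->
  cG * (1 + Rabs x) <= sqrt ((1 + Rabs x) / S) * Cmod ((S - N * mu) * sq / b_of gamma).
Proof.
  intros HS Hgamma Hg Hsq. pose proof sigma_pos.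
  destruct (b_of_bounds gamma Hg) as [Hbl [Hb0l Hb0h]].
  pose proof (Rabs_pos x). pose proof (Cmod_ge_0 sq).
  destruct zero_asymptotics_constants_pos as [_ [Hbh [HB2 _]]].
  assert (Hr : 0 < sqrt S) by (apply sqrt_lt_R0; lra).
  assert (Hscale : cg / bh <= gamma / b_of gamma).
  { unfold bh, b_of. pose proof (sqrt_lt_R0 mu mu_pos). pose proof (sqrt_lt_R0 2 ltac:(lra)).
    replace (gamma / (gamma * sqrt mu / (sigma * sqrt 2))) with (sigma * sqrt 2 / sqrt mu)
      by (field; repeat split; lra).
    replace (cg / (Cg * sqrt mu / (sigma * sqrt 2))) with (cg / Cg * (sigma * sqrt 2 / sqrt mu))
      by (field; repeat split; lra).
    assert (cg / Cg <= 1) by (apply (Rmult_le_reg_r Cg); [lra|]; unfold Rdiv;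
                               rewrite Rmult_assoc, Rinv_l; lra).
    assert (0 < sigma * sqrt 2 / sqrt mu) by (apply Rdiv_lt_0_compat; nra). nra. }
  assert (Hsqlow : sqrt B2 * sqrt (1 + Rabs x) <= Cmod sq).
  { rewrite <- sqrt_mult_alt, <- (sqrt_pow2 (Cmod sq)) by lra. now apply sqrt_le_1_alt. }
  assert (Hb0 : RtoC (b_of gamma) <> 0) by (intros HH; apply RtoC_inj in HH; lra).
  rewrite <- RtoC_mult, <- RtoC_minus, <- Hgamma, Cmod_div by exact Hb0.
  rewrite !Cmod_mult, !Cmod_R, (Rabs_right (sqrt S * gamma)), (Rabs_right (b_of gamma))
    by (apply Rle_ge; nra).
  assert (Hy : sqrt S * sqrt ((1 + Rabs x) / S) = sqrt (1 + Rabs x)) by (apply sqrt_mult_sqrt_ratio; lra).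
  set (u := sqrt ((1 + Rabs x) / S)) in *. set (y := 1 + Rabs x) in *.
  assert (Hyy : sqrt y * sqrt y = y) by (apply sqrt_sqrt; unfold y; lra).
  replace (u * (sqrt S * gamma * Cmod sq / b_of gamma))
    with (gamma / b_of gamma * (sqrt S * u * Cmod sq)) by (field; lra).
  rewrite Hy. unfold cG.
  apply Rle_trans with (cg / bh * (sqrt y * (sqrt B2 * sqrt y))).
  - right. rewrite <- Hyy at 1. ring.
  - pose proof (sqrt_pos y). pose proof (sqrt_pos B2).
    apply Rmult_le_compat; try nra. apply Rdiv_le_0_compat; lra.
Qed.

Lemma csqrt_shift_b_of_bounds (gamma x : R) : cg <= gamma <= Cg ->
  let sq := csqrt (Cminus (RtoC (b_of gamma ^ 2)) (Cmult (RtoC (2 * PI * x)) Ci)) in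
  Cmod sq ^ 2 <= B1 * (1 + Rabs x) /\ B2 * (1 + Rabs x) <= Cmod sq ^ 2.
Proof.
  intros Hg sq. destruct (b_of_bounds gamma Hg) as [Hbl [Hb0l Hb0h]].
  destruct (Cmod_csqrt_shift_sqr_bounds (b_of gamma) x) as [Hlow Hhigh].
  pose proof (Rabs_pos x). split.
  - eapply Rle_trans; [exact Hhigh|]. apply Rmult_le_compat_r; [lra|].
    unfold B1. pose proof (pow_incr (b_of gamma) bh 2 ltac:(lra)). lra.
  - eapply Rle_trans; [|exact Hlow]. apply Rmult_le_compat_r; [lra|].
    unfold B2. apply Rmult_le_compat_r; [lra|].
    pose proof (pow_incr bl (b_of gamma) 2 ltac:(lra)).
    unfold Rmin. destruct (Rle_dec (bl ^ 2) (2 * PI)), (Rle_dec (b_of gamma ^ 2) (2 * PI)); lra.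
Qed.

Lemma zero_asymptotics : exists C0 tau, 0 < tau /\
  forall (S N gamma x : R) (Z L : C),
    0 < S -> 0 < N -> gamma = sqrt S * (1 - N * mu / S) -> cg <= gamma <= Cg ->
    (1 + Rabs x) / S <= tau ->
    let b0 := gamma * sqrt mu / (sqrt var * sqrt 2) in
    let sq := csqrt (Cminus (RtoC (b0 ^ 2)) (Cmult (RtoC (2 * PI * x)) Ci)) in
    Cmod (Z - (1 + RtoC (sqrt (2 * mu) / sqrt var / sqrt S) * (b0 + sq))) <= CZ * (1 + Rabs x) / S ->
    Cmod (Z - 1) <= ew /\
    (Cmod (L - mu - var * (Z - 1)) <= KL * Cmod (Z - 1) ^ 2 ->
     (N * L - S)%C <> 0 /\
     Cmod (((S - N * mu) * sq / b0 - (N * L - S)) / (N * L - S)) <= C0 * (1 + Rabs x) / sqrt S).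
Proof.
  destruct zero_asymptotics_constants_pos as [Hbl [Hbh [HB2 [HKw [HB4 HcG]]]]].
  set (theta := Rmin 1 (Rmin (ew / Kw) (cG / (2 * B4)))).
  assert (Htheta : 0 < theta) by (unfold theta; repeat apply Rmin_pos; try apply Rdiv_lt_0_compat; lra).
  assert (Htheta1 : theta <= 1) by apply Rmin_l.
  assert (Htheta2 : theta <= ew / Kw) by (eapply Rle_trans; [apply Rmin_r|apply Rmin_l]).
  assert (Htheta3 : theta <= cG / (2 * B4)) by (eapply Rle_trans; [apply Rmin_r|apply Rmin_r]).
  exists (2 * B4 / cG), (theta ^ 2). split; [now apply pow_lt|].
  intros S N gamma x Z L HS HN Hgamma Hg Ht b0 sq Hzeta.
  pose proof (Rabs_pos x) as Hka.
  assert (Hgamma' : sqrt S * gamma = S - N * mu).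
  { rewrite Hgamma, <- Rmult_assoc, sqrt_sqrt by lra. field. lra. }
  set (t := (1 + Rabs x) / S) in *. set (u := sqrt t).
  assert (Htpos : 0 < t) by (apply Rdiv_lt_0_compat; lra).
  assert (Hu : 0 < u <= theta).
  { split; [now apply sqrt_lt_R0|]. rewrite <- (sqrt_pow2 theta) by lra. now apply sqrt_le_1_alt. }
  assert (Ht1 : t <= 1) by (pose proof (pow_incr theta 1 2 ltac:(lra)); simpl in *; lra).
  destruct (csqrt_shift_b_of_bounds gamma x Hg) as [Hsq1 Hsq2].
  destruct (b_of_bounds gamma Hg) as [_ [Hb0l Hb0h]]. change (b_of gamma) with b0 in Hb0l, Hb0h.
  pose proof (zero_deviation_bound S x b0 sq Z HS Ht1 ltac:(lra) Hsq1 Hzeta) as Hw. fold t u in Hw.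
  split.
  { eapply Rle_trans; [exact Hw|]. apply (Rmult_le_reg_r (/ Kw)); [now apply Rinv_0_lt_compat|].
    rewrite Rmult_comm, <- Rmult_assoc, Rinv_l, Rmult_1_l by lra. lra. }
  intros HL.
  pose proof (zero_defect_bound S N gamma x sq Z L HS HN Ht1 Hgamma' Hg Hsq1 Hzeta HL) as HDl.
  pose proof (main_term_lower_bound S N gamma x sq HS Hgamma' Hg Hsq2) as HG. fold t u in HG.
  assert (Hu4 : u * (2 * B4) <= cG)
    by (apply (Rmult_le_reg_r (/ (2 * B4))); [apply Rinv_0_lt_compat; lra|];
        rewrite Rmult_assoc, Rinv_r, Rmult_1_r by lra; lra).
  change (b_of gamma) with b0 in HDl, HG.
  set (G := ((S - N * mu) * sq / b0)%C) in *. set (Dl := (G - (N * L - S))%C) in *.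
  replace (N * L - S)%C with (G - Dl)%C by (unfold Dl; ring).
  destruct (Cmod_relative_error_le _ _ B4 cG u (1 + Rabs x) HcG ltac:(lra) (proj1 Hu) Hu4 HDl HG)
    as [Hne Hrel].
  split; [exact Hne|]. eapply Rle_trans; [exact Hrel|].
  unfold Rdiv at 2. rewrite Rmult_assoc.
  apply Rmult_le_compat_l; [apply Rdiv_le_0_compat; lra|apply sqrt_ratio_le; lra].
Qed.

End ZeroAsymptotics.

Lemma eventually_ratio_le (rho : nat -> R) (tau : R) : is_lim_seq rho 0 -> 0 < tau ->
  exists s0 : nat, forall (s : nat) (x : R), (s0 <= s)%nat -> (0 < s)%nat ->
    Rabs x <= rho s * INR s -> (1 + Rabs x) / INR s <= tau.
Proof.
  intros Hrho Htau.
  assert (Htau2 : 0 < tau / 2) by lra.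
  destruct (proj2 (is_lim_seq_spec rho 0) Hrho (mkposreal _ Htau2)) as [N1 HN1].
  destruct (proj2 (is_lim_seq_spec INR p_infty) is_lim_seq_INR (2 / tau)) as [N2 HN2].
  exists (Nat.max N1 N2). intros s x Hs Hs0 Hx.
  specialize (HN1 s ltac:(lia)). specialize (HN2 s ltac:(lia)). simpl in HN1.
  assert (HS : 0 < INR s) by (apply lt_0_INR; lia).
  rewrite Rminus_0_r in HN1. apply Rabs_def2 in HN1.
  apply (Rmult_le_reg_r (INR s)); [exact HS|].
  unfold Rdiv. rewrite Rmult_assoc, Rinv_l, Rmult_1_r by lra.
  assert (2 <= tau * INR s).
  { apply (Rmult_le_reg_l (/ tau)); [now apply Rinv_0_lt_compat|].
    rewrite <- Rmult_assoc, Rinv_l, Rmult_1_l by lra. unfold Rdiv in HN2. lra. }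
  nra.
Qed.

Lemma root_derivative_ratio (S N mu b0 : R) (sq Z X X' P Q dA : C) :
  b0 <> 0 -> sq <> 0 -> Z <> 0 -> X <> 0 -> P <> 0 -> (Z * P = X * Q)%C -> dA = (N * Q * X')%C ->
  (N * (Z * X' / X) - S)%C <> 0 ->
  Copp (Cdiv (RtoC (S - N * mu)) (Cminus (Cmult (RtoC S) P) dA))
  = Cmult (Cmult (Cdiv (RtoC b0) sq) (Cinv P))
          (Cplus (RtoC 1) (((S - N * mu) * sq / b0 - (N * (Z * X' / X) - S)) / (N * (Z * X' / X) - S))%C).
Proof.
  intros Hb0 Hsq HZ HX HP HZP HdA HD. subst dA.
  assert (HQ : Q = (Z * P / X)%C) by (rewrite HZP; field; auto).
  assert (Hb0C : RtoC b0 <> 0) by (intros HH; apply RtoC_inj in HH; auto).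
  assert (Hden : (S * P - N * Q * X' = - (P * (N * (Z * X' / X) - S)))%C)
    by (rewrite HQ; field; auto).
  unfold Cminus at 1. change (Cplus (Cmult S P) (Copp (N * Q * X')))%C with (S * P - N * Q * X')%C.
  assert (HD' : (N * (Z * X') - S * X)%C <> 0).
  { intros HD0. apply HD. replace (N * (Z * X' / X) - S)%C with ((N * (Z * X') - S * X) / X)%C
      by (field; auto). rewrite HD0. field. auto. }
  rewrite Hden, RtoC_minus, RtoC_mult. field. repeat split; auto.
Qed.

Theorem lemma5p2 (p : nat -> R) :
  is_distribution p ->
  (* radius of convergence r > 1 (r may be +oo) *)
  Rbar_lt (Finite 1) (CV_radius p) ->
  0 < pgf_mean p ->
  0 < pgf_var p ->
  (* |X(z)| < X(r1) whenever |z| = r1, z <> r1, r1 in (0, r) *)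
  (forall (r1 : R) (z : C), 0 < r1 -> Rbar_lt (Finite r1) (CV_radius p) ->
     Cmod z = r1 -> z <> RtoC r1 -> Cmod (pgf p z) < Re (pgf p (RtoC r1))) ->
  let mu := pgf_mean p in
  let sigma := sqrt (pgf_var p) in
  (* bounds for gamma, O-constant in the definition of Z_k, and the rate
     rho(s) -> 0 expressing k = o(s) *)
  forall (cg Cg CZ : R) (rho : nat -> R),
    0 < cg -> is_lim_seq rho 0 ->
  exists (C0 : R) (s0 : nat),
  forall (s n : nat) (k : Z) (Zk dA : C),
    (s0 <= s)%nat -> (0 < s)%nat -> (0 < n)%nat ->
    let A := fun z : C => cpow (pgf p z) n in
    let muA := INR n * mu in
    muA < INR s ->
    (* degree of X(z) larger than s/n *)
    (exists j : nat, 0 < p j /\ INR s / INR n < INR j) ->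
    let gamma := sqrt (INR s) * (1 - muA / INR s) in
    cg <= gamma <= Cg ->
    Rabs (IZR k) <= rho s * INR s ->
    let a0 := sqrt (2 * mu) / sigma in
    let b0 := gamma * sqrt mu / (sigma * sqrt 2) in
    let sq := csqrt (Cminus (RtoC (b0 ^ 2)) (Cmult (RtoC (2 * PI * IZR k)) Ci)) in
    (* Z_k is a zero of z^s - A(z) in 1 < |z| < r ... *)
    1 < Cmod Zk -> Rbar_lt (Finite (Cmod Zk)) (CV_radius p) ->
    cpow Zk s = A Zk ->
    (* ... with the stated asymptotic expansion *)
    Cmod (Cminus Zk (Cplus (RtoC 1)
            (Cmult (RtoC (a0 / sqrt (INR s))) (Cplus (RtoC b0) sq))))
      <= CZ * (1 + Rabs (IZR k)) / INR s ->
    (* dA = A'(Z_k), complex derivative *)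
    is_derive (K := C_AbsRing) (V := C_NormedModule) A Zk dA ->
    exists E : C,
      Copp (Cdiv (RtoC (INR s - muA))
                 (Cminus (Cmult (RtoC (INR s)) (cpow Zk (s - 1))) dA))
      = Cmult (Cmult (Cdiv (RtoC b0) sq) (Cinv (cpow Zk (s - 1))))
              (Cplus (RtoC 1) E)
      /\ Cmod E <= C0 * (1 + Rabs (IZR k)) / sqrt (INR s).
Proof.
  intros [Hp0 Hp1] Hr Hmu Hvar _ mu sigma cg Cg CZ rho Hcg Hrho.
  destruct (exists_summable_pgf_weight p Hp0 Hr) as [rad [Hrad Hw]].
  set (KL := 2 * (1 + Rabs mu + Rabs (pgf_var p)) * Series (pgf_weight p rad)).
  assert (HKL : 0 <= KL).
  { pose proof (pgf_weight_Series_nonneg p Hp0 rad ltac:(lra) Hw).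
    pose proof (Rabs_pos mu). pose proof (Rabs_pos (pgf_var p)). unfold KL. nra. }
  destruct (zero_asymptotics mu (pgf_var p) cg (Rmax Cg cg) CZ KL (pgf_near_one_radius p rad) Hmu Hvar
              Hcg (Rmax_r Cg cg) HKL (pgf_near_one_radius_pos p Hp0 rad ltac:(lra) Hw Hrad))
    as [C0 [tau [Htau Hasym]]].
  destruct (eventually_ratio_le rho tau Hrho Htau) as [s0 Hs0].
  exists C0, s0.
  intros s n k Zk dA Hs Hs1 Hn1 A muA _ _ gamma Hgamma Hk a0 b0 sq HZ1 _ Hroot Hzeta Hder.
  destruct (Hasym (INR s) (INR n) gamma (IZR k) Zk (Zk * pgf_deriv p Zk / pgf p Zk)%C
              (lt_0_INR s ltac:(lia)) (lt_0_INR n ltac:(lia)) eq_refl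
              (conj (proj1 Hgamma) (Rle_trans _ _ _ (proj2 Hgamma) (Rmax_l Cg cg)))
              (Hs0 s (IZR k) Hs Hs1 Hk) Hzeta) as [Hnear Hrel].
  destruct (pgf_near_one p Hp0 rad ltac:(lra) Hw Hp1 Zk Hrad Hnear) as [HZ [HX0 HL]].
  destruct (Hrel HL) as [HD0 HE].
  eexists. split; [|exact HE].
  assert (Hb0 : b0 <> 0).
  { pose proof (sqrt_lt_R0 _ Hmu). pose proof (sqrt_lt_R0 _ Hvar). pose proof (sqrt_lt_R0 2 ltac:(lra)).
    unfold b0, sigma, mu. apply Rgt_not_eq, Rdiv_lt_0_compat; apply Rmult_lt_0_compat; lra. }
  apply (root_derivative_ratio _ _ _ _ _ _ _ _ _ (cpow (pgf p Zk) (n - 1))); auto.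
  - apply csqrt_shift_neq0, Hb0.
  - apply Cmod_gt_0. lra.
  - apply cpow_neq0, Cmod_gt_0. lra.
  - rewrite <- !cpow_pred by lia. exact Hroot.
  - exact (pgf_power_derivative p Hp0 rad ltac:(lra) Hw n Zk dA HZ Hder).
Qed.
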